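(* Let $p\ge5$ and let $\rho$ be the rightmost assignment on the white metallic tree. For every node $\nu$ of $\mathcal W_\rho$, the integer whose nzm-code is the nzm-code of $\nu$ followed by the digit $1$ (the successor of $\nu$) is a son of $\nu$ in $\mathcal W_\rho$, and no other son of $\nu$ in $\mathcal W_\rho$ has an nzm-code ending with $1$. Moreover, $\rho$ is the unique assignment $\alpha$ such that, for every node $\nu$, the successor of $\nu$ is a son of $\nu$ in $\mathcal W_\alpha$.
   Context: Fix $p\ge5$. Metallic numbers: $m_{-1}=0$, $m_0=1$, $m_{n+2}=(p-2)m_{n+1}-m_n$. With $x=p-2$, $d=p-3$, the nzm-code of a positive integer $n$ is the unique word $a_k\cdots a_0$ over $\{1,\dots,p-2\}$ with $n=\sum a_im_i$ containing no factor $x\,d^j\,x$ ($j\ge0$). White metallic tree under an assignment $\alpha$, $\mathcal W_\alpha$: nodes are the positive integers, each black or white; root $1$ is white; nodes are processed in increasing order, node $\nu$ receives $p-2$ sons if white and $p-3$ sons if black, namely the smallest integers not yet used, in increasing order; an assignment specifies for each node the position (leftmost $=1$) of its unique black son among its sons, other sons being white. The rightmost assignment $\rho$ always puts the black son at the last position. *)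

From mathcomp Require Import all_boot.
Set Implicit Arguments. Unset Strict Implicit. Unset Printing Implicit Defensive.

(* For p >= 5 the sequence is strictly increasing, so truncated nat
   subtraction never truncates. *)
Fixpoint metal (p n : nat) : nat :=
  match n with
  | 0 => 1
  | S n1 => match n1 with
            | 0 => p - 2
            | S n0 => (p - 2) * metal p n1 - metal p n0
            end
  end.

(* A word a_k ... a_0 is represented by the list [:: a_k; ...; a_0]
   (most significant digit first); its value is \sum_i a_i m_i. *)
Definition nzm_val (p : nat) (w : seq nat) : nat :=
  \sum_(i < size w) nth 0 (rev w) i * metal p i.

(* The forbidden factor x d^j x, with x = p-2, d = p-3. *)
Definition forbidden_factor (p j : nat) : seq nat :=
  (p - 2) :: rcons (nseq j (p - 3)) (p - 2).

Definition is_nzm_word (p : nat) (w : seq nat) : Prop :=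
  [/\ w != [::],
      all (fun a => 1 <= a <= p - 2) w
    & forall j, ~~ infix (forbidden_factor p j) w].

Definition nzm_code (p n : nat) (w : seq nat) : Prop :=
  is_nzm_word p w /\ nzm_val p w = n.

(* colour: true = white, false = black *)
Definition nsons (p : nat) (white : bool) : nat := if white then p - 2 else p - 3.

(* A position rule r: r nu c = position (leftmost = 1) of the black son of
   node nu, whose colour is c.  An assignment alpha : nat -> nat is the rule
   fun nu _ => alpha nu. *)
Definition asg (alpha : nat -> nat) : nat -> bool -> nat := fun nu _ => alpha nu.

(* wstate p r k = (colours, N) after processing nodes 1..k in increasing
   order: colours assigned so far (root 1 white) and N = smallest integer
   not yet used. *)
Fixpoint wstate (p : nat) (r : nat -> bool -> nat) (k : nat)
  : (nat -> bool) * nat :=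
  match k with
  | 0 => (fun _ => true, 2)
  | S k' =>
      let (col, N) := wstate p r k' in
      let c := nsons p (col k) in
      let b := N + r k (col k) - 1 in
      (fun n => if (N <= n) && (n < N + c) then n != b else col n, N + c)
  end.

Definition wcolor (p : nat) (r : nat -> bool -> nat) (n : nat) : bool :=
  (wstate p r n.-1).1 n.
Definition wfirst (p : nat) (r : nat -> bool -> nat) (n : nat) : nat :=
  (wstate p r n.-1).2.

Definition wson (p : nat) (r : nat -> bool -> nat) (nu s : nat) : Prop :=
  1 <= nu /\ wfirst p r nu <= s < wfirst p r nu + nsons p (wcolor p r nu).

Definition valid_assignment (p : nat) (alpha : nat -> nat) : Prop :=
  forall nu, 1 <= nu -> 1 <= alpha nu <= nsons p (wcolor p (asg alpha) nu).

Definition rightmost_rule (p : nat) : nat -> bool -> nat := fun _ c => nsons p c.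
Definition rho (p : nat) (nu : nat) : nat :=
  nsons p (wcolor p (rightmost_rule p) nu).

(* Write codes least significant digit first.  On admissible codes the
   successor is an odometer: the lowest digit is incremented unless it has
   reached its maximum ([x], or [d] when the digits above start with [d^j x]),
   in which case it is reset to [1] and the carry propagates.  Let [M k] be the
   value of the code of [k] shifted up one place (digit [i] weighted by
   [m_(i+1)]); then [M (k+1) - M k] is the largest digit allowed below the code
   of [k].  For the rightmost assignment, the first free integer after
   processing nodes [1..k] is [M k + 2], by strong induction: node [k+1] is
   black iff it is the last son [M j + 1] of an earlier node [j], i.e. iff its
   code is [1] followed by the code of [j], i.e. iff [x] is not allowed below
   the code of [k]; so [k+1] has [M (k+1) - M k] sons.  Hence the sons of [nu]
   run from [M (nu-1) + 2] to [M nu + 1], the successor of [nu], and a number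
   whose code ends in [1] is the last son of a unique node.
   If an assignment first deviates from [rho] at node [K+1], its black son [q]
   there is not the last son; both trees agree below [q], but [q] is black
   under it and white under [rho], so it loses its last son, the successor. *)

From mathcomp Require Import all_boot zify.
Set Implicit Arguments. Unset Strict Implicit. Unset Printing Implicit Defensive.

Section Codes.
Variable p : nat.
Hypothesis p_ge5 : 5 <= p.

Lemma metal0 : metal p 0 = 1. Proof. by []. Qed.
Lemma metal1 : metal p 1 = p - 2. Proof. by []. Qed.
Lemma metalSS n : metal p n.+2 = (p - 2) * metal p n.+1 - metal p n.
Proof. by []. Qed.
Local Arguments metal : simpl never.

Lemma three_metal_le n : 3 * metal p n <= (p - 2) * metal p n.
Proof. by apply: leq_mul => //; lia. Qed.

Lemma metalS_ge_double n : 2 * metal p n <= metal p n.+1.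
Proof.
elim: n => [|n IH]; first by rewrite metal0 metal1; lia.
by rewrite metalSS; have := three_metal_le n.+1; lia.
Qed.

Lemma metalSS_add n : metal p n.+2 + metal p n = (p - 2) * metal p n.+1.
Proof.
by rewrite metalSS; have := metalS_ge_double n; have := three_metal_le n.+1; lia.
Qed.

(* Codes are handled as digit lists with the least significant digit first,
   i.e. reversed with respect to [nzm_val]. *)
Fixpoint mval k r : nat :=
  if r is a :: r' then a * metal p k + mval k.+1 r' else 0.

Lemma mval_nil k : mval k [::] = 0. Proof. by []. Qed.
Lemma mval_cons k a r : mval k (a :: r) = a * metal p k + mval k.+1 r.
Proof. by []. Qed.
Local Arguments mval : simpl never.

Lemma mval_rec2 k r : mval k.+2 r + mval k r = (p - 2) * mval k.+1 r.
Proof.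
elim: r k => [|a r IH] k; first by rewrite !mval_nil muln0.
by rewrite !mval_cons mulnDr mulnCA -metalSS_add -IH mulnDr; lia.
Qed.

Lemma mval_leS k r : mval k r <= mval k.+1 r.
Proof.
elim: r k => [|a r IH] k; first by rewrite !mval_nil.
by rewrite !mval_cons leq_add ?leq_mul //; have := metalS_ge_double k; lia.
Qed.

Lemma mval0_cons a r : mval 0 (a :: r) = a + mval 1 r.
Proof. by rewrite mval_cons metal0 muln1. Qed.

Lemma mval1_cons a r : mval 1 (a :: r) + mval 0 r = (p - 2) * mval 0 (a :: r).
Proof.
by rewrite mval_cons mval0_cons -addnA mval_rec2 metal1 mulnDr mulnC.
Qed.

Lemma mval_sum k r : mval k r = \sum_(i < size r) nth 0 r i * metal p (i + k).
Proof.
elim: r k => [|a r IH] k; first by rewrite mval_nil big_ord0.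
rewrite mval_cons big_ord_recl IH; congr (_ + _).
by apply: eq_bigr => i _; rewrite addSnnS.
Qed.

Lemma nzm_valE w : nzm_val p w = mval 0 (rev w).
Proof. by rewrite mval_sum size_rev; apply: eq_bigr => i _; rewrite addn0. Qed.

(* [forbids_x r]: [r] starts with [d^j x], so that placing the digit [x]
   below [r] would create the factor [x d^j x]. *)
Fixpoint forbids_x r : bool :=
  if r is a :: r' then (a == p - 2) || (a == p - 3) && forbids_x r' else false.

Definition max_digit r := if forbids_x r then p - 3 else p - 2.

Fixpoint admissible r : bool :=
  if r is a :: r' then admissible r' && (1 <= a <= max_digit r') else true.

Fixpoint succ_code r : seq nat :=
  if r is a :: r' then
    if a < max_digit r' then a.+1 :: r' else 1 :: succ_code r'
  else [:: 1].

Fixpoint pred_code r : seq nat :=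
  match r with
  | [::] => [::]
  | a :: r' =>
      if 2 <= a then a.-1 :: r'
      else if r' is [::] then [::] else max_digit (pred_code r') :: pred_code r'
  end.

Definition code n := iter n succ_code [::].

(* Lowest digit [1], excluding the code [[:: 1]] of the root. *)
Definition ends_in_one r := if r is 1 :: _ :: _ then true else false.

Lemma forbids_x_cons a r :
  forbids_x (a :: r) = (a == p - 2) || (a == p - 3) && forbids_x r.
Proof. by []. Qed.

Lemma admissible_cons a r :
  admissible (a :: r) = admissible r && (1 <= a <= max_digit r).
Proof. by []. Qed.

Lemma max_digit_bounds r : p - 3 <= max_digit r <= p - 2.
Proof. by rewrite /max_digit; case: (forbids_x r); lia. Qed.

Lemma succ_code_neq0 r : succ_code r != [::].
Proof. by case: r => //= a r; case: ifP. Qed.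

Lemma admissible_succ_code r : admissible r -> admissible (succ_code r).
Proof.
elim: r => [|a r IH] /=; first by rewrite /max_digit /=; lia.
case/andP=> adm_r a_le; case: ifP => a_lt /=; first by rewrite adm_r; lia.
by rewrite IH //=; have := max_digit_bounds (succ_code r); lia.
Qed.

Lemma forbids_x_cons_admissible a r :
  admissible (a :: r) -> forbids_x (a :: r) = (a == max_digit r).
Proof.
case/andP=> _; rewrite /= /max_digit; case: (forbids_x r);
  rewrite ?andbT ?andbF ?orbF => a_le; apply/idP/idP => /eqP ?; apply/eqP; lia.
Qed.

Lemma mval_succ_code r : admissible r ->
  mval 0 (succ_code r) = (mval 0 r).+1 /\
  mval 1 (succ_code r) = mval 1 r + max_digit r.
Proof.
elim: r => [|a r IH].
  by move=> _; rewrite /= !mval_cons !mval_nil metal0 metal1 /max_digit /=; lia.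
move=> /[dup] adm; rewrite admissible_cons => /andP [adm_r a_le] /=.
case: ifP => a_lt.
- have := mval1_cons a.+1 r; have := mval1_cons a r.
  rewrite /max_digit forbids_x_cons_admissible // (ltn_eqF a_lt) !mval0_cons.
  by rewrite !mulnDr mulnSr; lia.
- have a_eq : a = max_digit r by lia.
  have [IH0 IH1] := IH adm_r.
  have := mval1_cons 1 (succ_code r); have := mval1_cons a r.
  rewrite [max_digit (a :: r)]/max_digit forbids_x_cons_admissible // -a_eq eqxx.
  by rewrite !mval0_cons IH0 IH1 !mulnDr muln1; lia.
Qed.

Lemma ends_in_one_succ_code r :
  admissible r -> ends_in_one (succ_code r) = forbids_x r.
Proof.
case: r => [|a r] // adm; rewrite forbids_x_cons_admissible //.
case/andP: adm => _ a_le /=; case: ifP => a_lt.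
  by case: a a_le a_lt => [|a] //= _ a_lt; rewrite (ltn_eqF a_lt).
by case: (succ_code r) (succ_code_neq0 r) => //= _ _; symmetry; apply/eqP; lia.
Qed.

Lemma pred_codeK r : admissible r -> r != [::] ->
  admissible (pred_code r) /\ succ_code (pred_code r) = r.
Proof.
elim: r => [|a r IH] //; rewrite admissible_cons => /andP [adm_r a_le] _ /=.
case: ifP => a_ge2.
  have [a_pos a_le'] : 0 < a /\ a <= max_digit r by lia.
  by rewrite /= adm_r prednK // a_le'; split=> //; lia.
have -> : a = 1 by lia.
case: r IH adm_r {a_le} => [|b r] // IH adm_r.
have [adm_pred predK] := IH adm_r isT.
move: (pred_code (b :: r)) adm_pred predK => q adm_q qK /=.
by rewrite adm_q qK ltnn; split=> //; have := max_digit_bounds q; lia.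
Qed.

Lemma admissible_mval_eq0 r : admissible r -> mval 0 r = 0 -> r = [::].
Proof. by case: r => // a r /andP [_ a_le]; rewrite mval0_cons; lia. Qed.

Lemma admissible_code n : admissible (code n).
Proof. by elim: n => //= n; apply: admissible_succ_code. Qed.

Lemma mval_code n : mval 0 (code n) = n.
Proof.
by elim: n => //= n IH; rewrite (mval_succ_code (admissible_code n)).1 IH.
Qed.

Lemma mval1_code_succ n :
  mval 1 (code n.+1) = mval 1 (code n) + max_digit (code n).
Proof. exact: (mval_succ_code (admissible_code n)).2. Qed.

Lemma code_mval r : admissible r -> code (mval 0 r) = r.
Proof.
move=> adm; move val_r: (mval 0 r) => n.
elim: n r val_r adm => [|n IH] r val_r adm.
  by rewrite (admissible_mval_eq0 adm val_r).
have r_neq0 : r != [::] by case: r val_r {adm}.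
have [adm_pred predK] := pred_codeK adm r_neq0.
have := (mval_succ_code adm_pred).1; rewrite predK val_r => -[/esym val_pred].
by rewrite /code iterS -/(code n) (IH _ val_pred adm_pred) predK.
Qed.

Lemma forbids_x_prefix r :
  forbids_x r <-> exists j, prefix (rcons (nseq j (p - 3)) (p - 2)) r.
Proof.
elim: r => [|a r IH]; first by split=> // -[] [].
rewrite forbids_x_cons; split=> [/orP [/eqP ->|/andP [/eqP -> /IH [j pre]]]|[[|j]]] /=.
- by exists 0; rewrite /= eqxx prefix0s.
- by exists j.+1; rewrite /= eqxx.
- by rewrite prefix0s andbT => /eqP ->; rewrite eqxx.
- by case/andP=> /eqP <- pre; apply/orP; right; rewrite eqxx andTb; apply/IH; exists j.
Qed.

Lemma forbidden_free_cons a r :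
  (forall j, ~~ infix (forbidden_factor p j) (a :: r)) <->
  (forall j, ~~ infix (forbidden_factor p j) r) /\ ~ (a = p - 2 /\ forbids_x r).
Proof.
split=> [free_ar|[free_r not_x] j].
  split=> [j|[a_x /forbids_x_prefix [j pre]]].
    by have := free_ar j; rewrite infix_consl negb_or => /andP [].
  by have := free_ar j; rewrite infix_consl /forbidden_factor /= a_x eqxx pre.
rewrite infix_consl negb_or free_r andbT /forbidden_factor /=.
apply/negP=> /andP [/eqP a_x pre]; apply: not_x; split=> //.
by apply/forbids_x_prefix; exists j.
Qed.

Lemma admissibleE r : admissible r <->
  all (fun a => 1 <= a <= p - 2) r /\ forall j, ~~ infix (forbidden_factor p j) r.
Proof.
elim: r => [|a r IH]; first by split=> // _; split=> // j; rewrite /forbidden_factor.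
rewrite forbidden_free_cons admissible_cons /= /max_digit.
have := max_digit_bounds r; rewrite /max_digit.
split=> [/andP [/IH [digits_r free_r] a_le]|[/andP [a_le digits_r] [free_r not_x]]].
  rewrite digits_r andbT; split; first lia.
  by split=> // -[a_x x_r]; move: a_le; rewrite x_r; lia.
have a_ne : forbids_x r -> a != p - 2 by move=> x_r; apply/eqP=> a_x; apply: not_x.
rewrite (_ : admissible r) /=; last exact/IH.
by case: (forbids_x r) a_ne => [/(_ isT)|_]; lia.
Qed.

Lemma forbidden_factor_rev j : rev (forbidden_factor p j) = forbidden_factor p j.
Proof. by rewrite /forbidden_factor rev_cons rev_rcons rev_nseq. Qed.

Lemma is_nzm_wordE w : is_nzm_word p w <-> w != [::] /\ admissible (rev w).
Proof.
split=> [[w_neq0 digits free]|[w_neq0 /admissibleE [digits free]]].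
  split=> //; apply/admissibleE; rewrite all_rev; split=> // j.
  by rewrite -forbidden_factor_rev infix_rev.
split=> //; first by rewrite -all_rev.
by move=> j; rewrite -infix_rev forbidden_factor_rev.
Qed.

Lemma code_neq0 n : 0 < n -> code n != [::].
Proof. by case: n => // n _; apply: succ_code_neq0. Qed.

Lemma nzm_codeE n w : 0 < n -> nzm_code p n w <-> w = rev (code n).
Proof.
move=> n_pos; split=> [[/is_nzm_wordE [_ adm] val_w]|->].
  by rewrite -val_w nzm_valE code_mval // revK.
split; last by rewrite nzm_valE revK mval_code.
by apply/is_nzm_wordE; rewrite revK admissible_code -size_eq0 size_rev size_eq0 code_neq0.
Qed.

Lemma ends_in_one_codeP n :
  ends_in_one (code n) <-> exists2 j, 0 < j & n = (mval 1 (code j)).+1.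
Proof.
split=> [|[j j_pos ->]].
  case code_n: (code n) => [|[|[|a]] [|b r]] //= _.
  have := admissible_code n; rewrite code_n admissible_cons => /andP [adm_br _].
  exists (mval 0 (b :: r)).
    by rewrite lt0n; apply/eqP => /(admissible_mval_eq0 adm_br).
  by rewrite code_mval // -(mval_code n) code_n mval0_cons.
have adm : admissible (1 :: code j).
  by rewrite admissible_cons admissible_code /=; have := max_digit_bounds (code j); lia.
rewrite -add1n -mval0_cons code_mval //=.
by case: (code j) (code_neq0 j_pos).
Qed.
End Codes.

Section WhiteTree.
Variables (p : nat) (r : nat -> bool -> nat).
Hypothesis p_ge5 : 5 <= p.

Definition wfree k := (wstate p r k).2.
Definition wcols k := (wstate p r k).1.

Lemma nsons_ge2 c : 2 <= nsons p c.
Proof. by rewrite /nsons; case: c; lia. Qed.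

Lemma wfree0 : wfree 0 = 2. Proof. by []. Qed.

Lemma wfreeS k : wfree k.+1 = wfree k + nsons p (wcolor p r k.+1).
Proof. by rewrite /wfree /wcolor /=; case: (wstate p r k). Qed.

Lemma wcolsS k n : wcols k.+1 n =
  if wfree k <= n < wfree k.+1 then n != wfree k + r k.+1 (wcolor p r k.+1) - 1
  else wcols k n.
Proof. by rewrite /wcols /wfree /wcolor /=; case: (wstate p r k). Qed.

Lemma wfree_pred nu : 0 < nu -> wfree nu = wfree nu.-1 + nsons p (wcolor p r nu).
Proof. by case: nu => // nu _; rewrite wfreeS. Qed.

Lemma wfree_ltS k : wfree k < wfree k.+1.
Proof. by rewrite wfreeS; have := nsons_ge2 (wcolor p r k.+1); lia. Qed.

Lemma wfree_ge k : 2 * k + 2 <= wfree k.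
Proof.
by elim: k => // k IH; rewrite wfreeS; have := nsons_ge2 (wcolor p r k.+1); lia.
Qed.

Lemma leq_wfree : {mono wfree : i j / i <= j}.
Proof. exact: leq_mono (homo_ltn ltn_trans wfree_ltS). Qed.

Lemma ltn_wfree : {mono wfree : i j / i < j}.
Proof. exact: leqW_mono leq_wfree. Qed.

Lemma wcols_stable k l n : k <= l -> n < wfree k -> wcols l n = wcols k n.
Proof.
move=> /subnK <- n_lt; elim: (l - k) => [|m IH] //.
rewrite addSn wcolsS IH; case: ifP => // /andP [n_ge _].
by have := leq_wfree k (m + k); rewrite leq_addl; lia.
Qed.

Lemma wcolorE k n : n < wfree k -> wcolor p r n = wcols k n.
Proof.
move=> n_lt; rewrite /wcolor -/(wcols n.-1); case: (leqP n.-1 k) => [le|lt].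
  by rewrite (wcols_stable le) //; have := wfree_ge n.-1; lia.
by rewrite (wcols_stable (ltnW lt) n_lt).
Qed.

Lemma wcolor_lt_wfreeS k n : n < wfree k.+1 -> wcolor p r n =
  if wfree k <= n then n != wfree k + r k.+1 (wcolor p r k.+1) - 1 else wcols k n.
Proof. by move=> n_lt; rewrite (wcolorE n_lt) wcolsS n_lt andbT. Qed.

Lemma wsonE nu s : wson p r nu s <-> 0 < nu /\ wfree nu.-1 <= s < wfree nu.
Proof.
rewrite /wson /wfirst -/(wfree nu.-1).
by split=> -[nu_pos]; rewrite (wfree_pred nu_pos).
Qed.

Lemma wcolor_wson j n :
  wson p r j n -> wcolor p r n = (n != wfree j.-1 + r j (wcolor p r j) - 1).
Proof.
by case: j => [|j] /wsonE [//= _ /andP [n_ge n_lt]]; rewrite (wcolor_lt_wfreeS n_lt) n_ge.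
Qed.

Lemma wson_exists n : 2 <= n -> exists j, wson p r j n.
Proof.
move=> n_ge2; have [k] : exists k, n < wfree k by exists n; have := wfree_ge n; lia.
elim: k => [|k IH] n_lt; first by rewrite wfree0 in n_lt; lia.
case: (ltnP n (wfree k)) => [/IH //|n_ge].
by exists k.+1; apply/wsonE; rewrite n_ge n_lt.
Qed.
End WhiteTree.

Lemma wstate_eq_rules p r1 r2 K :
  (forall i, 0 < i <= K -> r1 i (wcolor p r2 i) = r2 i (wcolor p r2 i)) ->
  wcols p r1 K =1 wcols p r2 K /\ wfree p r1 K = wfree p r2 K.
Proof.
elim: K => [|K IH] eq_r //.
have [eq_cols eq_free] : wcols p r1 K =1 wcols p r2 K /\ wfree p r1 K = wfree p r2 K.
  by apply: IH => i /andP [i_pos i_le]; apply: eq_r; rewrite i_pos leqW.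
have eq_col : wcolor p r1 K.+1 = wcolor p r2 K.+1 by apply: eq_cols.
split=> [n|]; last by rewrite !wfreeS eq_free eq_col.
by rewrite !wcolsS !wfreeS eq_free eq_col (eq_r K.+1 (leqnn _)) eq_cols.
Qed.

Lemma wfree_eq_wcolor p r1 r2 k :
  (forall i, 0 < i <= k -> wcolor p r1 i = wcolor p r2 i) -> wfree p r1 k = wfree p r2 k.
Proof.
elim: k => [|k IH] eq_col //.
rewrite !wfreeS (eq_col k.+1 (leqnn _)) IH // => i /andP [i_pos i_le].
by apply: eq_col; rewrite i_pos leqW.
Qed.

Section RightmostTree.
Variable p : nat.
Hypothesis p_ge5 : 5 <= p.
Local Notation rm := (rightmost_rule p).

Lemma rightmost_black n : 0 < n ->
  wcolor p rm n = false <-> exists2 j, 0 < j & wfree p rm j = n.+1.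
Proof.
move=> n_pos; case: (ltnP n 2) => [n_lt2|n_ge2].
  have -> : n = 1 by lia.
  by split=> // -[j j_pos]; have := wfree_ge rm p_ge5 j; lia.
have [j son_j] := wson_exists rm p_ge5 n_ge2.
rewrite (wcolor_wson p_ge5 son_j); case/wsonE: son_j => j_pos /andP [n_ge n_lt].
rewrite /= -(wfree_pred p rm j_pos).
split=> [/negbFE/eqP n_eq|[j' j'_pos j'_eq]]; first by exists j => //; lia.
have : j.-1 < j' by rewrite -(ltn_wfree rm p_ge5); lia.
have : j' <= j by rewrite -(leq_wfree rm p_ge5); lia.
move=> j'_le j'_gt; have j_eq : j' = j by lia.
by apply/negbTE; rewrite negbK -j_eq; apply/eqP; lia.
Qed.

Lemma wfree_rightmost k : wfree p rm k = (mval p 1 (code p k)).+2.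
Proof.
elim/ltn_ind: k => -[|k] IH //.
rewrite wfreeS IH // (mval1_code_succ p_ge5).
suff -> : nsons p (wcolor p rm k.+1) = max_digit p (code p k) by lia.
have black_succ : wcolor p rm k.+1 = false <-> ends_in_one (code p k.+1).
  rewrite rightmost_black // (ends_in_one_codeP p_ge5).
  split=> -[j j_pos j_eq]; exists j => //.
    have j_lt : j < k.+1 by have := wfree_ge rm p_ge5 j; lia.
    by move: j_eq; rewrite IH //; lia.
  have j_lt : j < k.+1 by have := mval_leS p_ge5 0 (code p j); rewrite mval_code; lia.
  by rewrite IH // -j_eq.
rewrite /nsons /max_digit -(ends_in_one_succ_code p_ge5 (admissible_code p_ge5 k)).
case col: (wcolor p rm k.+1); last by have /black_succ -> := col.
by case: ifP => // /black_succ; congruence.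
Qed.
End RightmostTree.

Section Rho.
Variable p : nat.
Hypothesis p_ge5 : 5 <= p.
Local Notation rm := (rightmost_rule p).

Lemma wfree_rho k : wfree p (asg (rho p)) k = wfree p rm k.
Proof. by have [] := @wstate_eq_rules p (asg (rho p)) rm k (fun i _ => erefl). Qed.

Lemma wson_rho nu s : wson p (asg (rho p)) nu s <-> wson p rm nu s.
Proof. by split=> /wsonE son; apply/wsonE; rewrite ?wfree_rho in son *. Qed.

Lemma nzm_val_succ w : nzm_val p (rcons w 1) = (mval p 1 (rev w)).+1.
Proof. by rewrite nzm_valE rev_rcons mval0_cons. Qed.

Lemma succ_last_son nu w :
  0 < nu -> nzm_code p nu w -> nzm_val p (rcons w 1) = (wfree p rm nu).-1.
Proof.
move=> nu_pos /(nzm_codeE p_ge5 _ nu_pos) ->.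
by rewrite nzm_val_succ revK wfree_rightmost.
Qed.

Lemma rightmost_succ_son nu w :
  0 < nu -> nzm_code p nu w -> wson p rm nu (nzm_val p (rcons w 1)).
Proof.
move=> nu_pos code_w; rewrite (succ_last_son nu_pos code_w); apply/wsonE; split=> //.
by rewrite (wfree_pred p rm nu_pos); have := nsons_ge2 p_ge5 (wcolor p rm nu); lia.
Qed.

Lemma ends_in_one_last_son s w : 2 <= s -> nzm_code p s w -> last 0 w = 1 ->
  exists2 j, 0 < j & s = (wfree p rm j).-1.
Proof.
move=> s_ge2 /(nzm_codeE p_ge5 _ (ltnW s_ge2)) -> last1.
suff /(ends_in_one_codeP p_ge5) [j j_pos ->] : ends_in_one (code p s).
  by exists j; rewrite ?wfree_rightmost.
have := mval_code p_ge5 s.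
case: (code p s) last1 => [|a [|b c]] //; rewrite rev_cons last_rcons => -> //.
by rewrite mval0_cons mval_nil; lia.
Qed.

Lemma rightmost_sons_ending_in_one nu s w : 0 < nu -> wson p rm nu s ->
  nzm_code p s w -> last 0 w = 1 -> s = (wfree p rm nu).-1.
Proof.
move=> nu_pos /wsonE [_ /andP [s_ge s_lt]] code_w last1.
have s_ge2 : 2 <= s by have := wfree_ge rm p_ge5 nu.-1; lia.
have [j j_pos s_eq] := ends_in_one_last_son s_ge2 code_w last1.
have : nu.-1 < j by rewrite -(ltn_wfree rm p_ge5); lia.
have : j <= nu by rewrite -(leq_wfree rm p_ge5); lia.
by move=> j_le j_gt; rewrite s_eq (_ : j = nu) //; lia.
Qed.

Lemma first_deviation_misses_succ alpha K :
  valid_assignment p alpha ->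
  (forall i, 0 < i <= K -> alpha i = rho p i) -> alpha K.+1 != rho p K.+1 ->
  exists2 q, 0 < q & ~ wson p (asg alpha) q (wfree p rm q).-1.
Proof.
move=> valid eq_alpha neq.
have [eq_cols eq_free] := @wstate_eq_rules p (asg alpha) rm K eq_alpha.
have eq_col : wcolor p (asg alpha) K.+1 = wcolor p rm K.+1 := eq_cols K.+1.
have := valid K.+1 isT; rewrite eq_col -/(rho p K.+1) => alpha_le.
set F := wfree p rm K; set c := rho p K.+1; set q := F + alpha K.+1 - 1.
have F_ge : 2 * K + 2 <= F := wfree_ge rm p_ge5 K.
have q_lt : q < F + c by lia.
have col_alpha n : n < F + c ->
    wcolor p (asg alpha) n = if F <= n then n != q else wcols p rm K n.
  move=> n_lt; rewrite (@wcolor_lt_wfreeS p _ p_ge5 K) ?wfreeS ?eq_free ?eq_col //.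
  by rewrite eq_cols.
have col_rm n : n < F + c ->
    wcolor p rm n = if F <= n then n != F + c - 1 else wcols p rm K n.
  by move=> n_lt; rewrite (@wcolor_lt_wfreeS p _ p_ge5 K) ?wfreeS.
have F_le_q : F <= q by lia.
have black_q : wcolor p (asg alpha) q = false by rewrite col_alpha // F_le_q eqxx.
have white_q : wcolor p rm q by rewrite col_rm // F_le_q; apply/eqP; lia.
have same_free : wfree p (asg alpha) q.-1 = wfree p rm q.-1.
  apply: wfree_eq_wcolor => i /andP [i_pos i_lt].
  rewrite col_alpha 1?col_rm; try lia; case: ifP => // _.
  by apply/idP/idP => _; apply/eqP; lia.
have q_pos : 0 < q by lia.
exists q => // /wsonE [_].
rewrite (wfree_pred p rm q_pos) (wfree_pred p (asg alpha) q_pos).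
by rewrite black_q white_q same_free /nsons; lia.
Qed.

Lemma rho_unique alpha : valid_assignment p alpha ->
  (forall nu w, 1 <= nu -> nzm_code p nu w ->
     wson p (asg alpha) nu (nzm_val p (rcons w 1))) ->
  forall nu, 1 <= nu -> alpha nu = rho p nu.
Proof.
move=> valid succ_son; elim/ltn_ind => -[//|K] IH _.
apply/eqP/contraT => neq.
have eq_alpha i : 0 < i <= K -> alpha i = rho p i.
  by case/andP=> i_pos i_le; apply: IH.
have [q q_pos []] := first_deviation_misses_succ valid eq_alpha neq.
have code_q : nzm_code p q (rev (code p q)) by apply/nzm_codeE.
by rewrite -(succ_last_son q_pos code_q); apply: succ_son.
Qed.
End Rho.

Theorem theorem9 (p : nat) (hp : 5 <= p) :
  (forall nu, 1 <= nu ->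
     (exists w, nzm_code p nu w) /\
     (forall w, nzm_code p nu w ->
        wson p (asg (rho p)) nu (nzm_val p (rcons w 1)) /\
        (forall s w', wson p (asg (rho p)) nu s ->
           s <> nzm_val p (rcons w 1) -> nzm_code p s w' -> last 0 w' <> 1)))
  /\
  (forall alpha : nat -> nat, valid_assignment p alpha ->
     (forall nu w, 1 <= nu -> nzm_code p nu w ->
        wson p (asg alpha) nu (nzm_val p (rcons w 1))) ->
     forall nu, 1 <= nu -> alpha nu = rho p nu).
Proof.
split=> [nu nu_pos|]; last exact: rho_unique.
split=> [|w code_w]; first by exists (rev (code p nu)); apply/nzm_codeE.
split=> [|s w' /wson_rho son_s s_neq code_w' last1].
  by apply/wson_rho; apply: rightmost_succ_son.
apply: s_neq; rewrite (succ_last_son hp nu_pos code_w).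
exact: rightmost_sons_ending_in_one son_s code_w' last1.
Qed.
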